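(* For every positive integer $n$, the poset $\widetilde\Pi(D_n)$ is a lattice.
   Context: For a positive integer $n$, $D_n=\langle r,s\mid r^n=e,\ s^2=e,\ srs^{-1}=r^{-1}\rangle$ is the dihedral group of order $2n$. For a finite group $G$ and a subgroup $H\le G$, let $\pi_e(H)=\{o(x)\mid x\in H\}$. Let $\mathcal{L}(G)$ be the set of subgroups of $G$; define $H_1\equiv H_2$ iff $\pi_e(H_1)=\pi_e(H_2)$, with class $[H]$. The poset $\widetilde\Pi(G)$ is $\mathcal{L}(G)/\!\equiv$ ordered by $[H_1]\lesssim[H_2]$ iff $\pi_e(H_1)\subseteq\pi_e(H_2)$. *)

From mathcomp Require Import all_boot all_fingroup.
Set Implicit Arguments. Unset Strict Implicit. Unset Printing Implicit Defensive.
Local Open Scope group_scope.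

Definition pi_e (gT : finGroupType) (H : {set gT}) : pred nat :=
  fun k => [exists x in H, #[x] == k].

Definition spec_le (gT : finGroupType) (H1 H2 : {set gT}) : Prop :=
  forall k, pi_e H1 k -> pi_e H2 k.

(* The poset  ~Pi(G) = L(G)/== , ordered by spec_le, is a lattice: any two
   classes [H1],[H2] have a least upper bound and a greatest lower bound,
   i.e. there are subgroups J, M of G whose classes are the join and meet. *)
Definition spec_poset_is_lattice (gT : finGroupType) (G : {group gT}) : Prop :=
  forall H1 H2 : {group gT}, H1 \subset G -> H2 \subset G ->
    (exists2 J : {group gT}, J \subset G &
       [/\ spec_le H1 J, spec_le H2 J &
           forall K : {group gT}, K \subset G ->
             spec_le H1 K -> spec_le H2 K -> spec_le J K]) /\
    (exists2 M : {group gT}, M \subset G &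
       [/\ spec_le M H1, spec_le M H2 &
           forall K : {group gT}, K \subset G ->
             spec_le K H1 -> spec_le K H2 -> spec_le K M]).

From mathcomp Require Import all_boot all_fingroup all_solvable.
Set Implicit Arguments.
Unset Strict Implicit.
Unset Printing Implicit Defensive.

Local Open Scope group_scope.

(* In D_n every element outside the cyclic subgroup R = <[r]> is an involution,
   and two elements of R with the same order generate the same subgroup. Hence
   an order common to subgroups H1 and H2 is either realised in
   C = H1 :&: H2 :&: R or equals 2; adjoining a reflection to C when 2 is common
   to H1 and H2 but missing from C yields a subgroup whose spectrum is exactly
   pi_e H1 /\ pi_e H2. So spectra of subgroups are closed under intersection,
   and a finite poset with binary meets and a top element ([G]) is a lattice. *)

Lemma order_involution (gT : finGroupType) (x : gT) :
  x ^+ 2 = 1 -> x != 1 -> #[x] = 2.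
Proof.
move=> x2 nx1; have : #[x] %| 2 by rewrite order_dvdn x2.
rewrite -order_eq1 in nx1; move: (order_gt0 x) nx1.
by case: #[x] => [|[|[|m]]].
Qed.

Lemma eq_cycle_cyclic (gT : finGroupType) (R : {group gT}) (x y : gT) :
  cyclic R -> x \in R -> y \in R -> #[x] = #[y] -> <[x]> = <[y]>.
Proof.
move=> cycR xR yR oxy; apply/eqP.
by rewrite (eq_subG_cyclic cycR) ?cycle_subG //; apply/eqP.
Qed.

Section Spectrum.
Variable gT : finGroupType.
Implicit Types (x : gT) (A B : {set gT}) (G H K M : {group gT}).

Lemma pi_eP A k : reflect (exists2 x, x \in A & #[x] = k) (pi_e A k).
Proof.
apply: (iffP existsP) => [[x /andP [xA /eqP]]|[x xA <-]]; first by exists x.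
by exists x; rewrite xA eqxx.
Qed.

Lemma pi_e1 H : pi_e H 1%N.
Proof. by apply/pi_eP; exists 1; rewrite ?group1 ?order1. Qed.

Lemma pi_eS A B k : A \subset B -> pi_e A k -> pi_e B k.
Proof.
by move=> sAB /pi_eP [x xA <-]; apply/pi_eP; exists x; rewrite ?(subsetP sAB).
Qed.

Lemma pi_e_involution H x : x ^+ 2 = 1 -> pi_e H #[x] \/ #[x] = 2.
Proof.
case: (eqVneq x 1) => [-> _ | nx1 x2]; last by right; apply: order_involution.
by left; rewrite order1; apply: pi_e1.
Qed.

(* [spec_le] is inclusion of these finite sets ([spec_leP]), which lets us
   compare spectra by cardinality. *)
Definition spec_set A : {set gT} := [set x | pi_e A #[x]].

Lemma spec_leP A B : reflect (spec_le A B) (spec_set A \subset spec_set B).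
Proof.
apply: (iffP subsetP) => [sAB k /pi_eP [x xA <-] | leAB x]; last first.
  by rewrite !inE; apply: leAB.
have /sAB : x \in spec_set A by rewrite inE; apply/pi_eP; exists x.
by rewrite inE.
Qed.

Definition spec_meet_closed G := forall H1 H2, H1 \subset G -> H2 \subset G ->
  exists2 M : {group gT}, M \subset G &
    forall k, pi_e M k = pi_e H1 k && pi_e H2 k.

Lemma spec_lattice_of_meet_closed G :
  spec_meet_closed G -> spec_poset_is_lattice G.
Proof.
move=> meetG H1 H2 sH1G sH2G; split; last first.
  have [M sMG defM] := meetG H1 H2 sH1G sH2G.
  exists M => //; split=> [k|k|K _ leKH1 leKH2 k Kk]; rewrite defM //.
  - by case/andP.
  - by case/andP.
  by rewrite leKH1 ?leKH2.
(* The join is an upper bound J with smallest [spec_set]: its meet with any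
   other upper bound is again an upper bound, hence has the same spectrum. *)
pose upper K := [&& K \subset G, spec_set H1 \subset spec_set K
                               & spec_set H2 \subset spec_set K].
have upperG : upper G.
  rewrite /upper subxx /=.
  by apply/andP; split; apply/spec_leP => k; apply: pi_eS.
have [J /and3P [sJG /spec_leP leH1J /spec_leP leH2J] minJ] :=
  arg_minnP (fun K => #|spec_set K|) upperG.
exists J => //; split=> // K sKG leH1K leH2K.
have [M sMG defM] := meetG J K sJG sKG.
have leMJ : spec_set M \subset spec_set J.
  by apply/spec_leP => k; rewrite defM => /andP [].
have upperM : upper M.
  rewrite /upper sMG /=.
  apply/andP; split; apply/spec_leP => k Hk; rewrite defM.
  - by rewrite (leH1J k Hk) (leH1K k Hk).
  - by rewrite (leH2J k Hk) (leH2K k Hk).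
have /eqP eqMJ : spec_set M == spec_set J by rewrite eqEcard leMJ minJ.
have /spec_leP leJM : spec_set J \subset spec_set M by rewrite eqMJ.
by move=> k /leJM; rewrite defM => /andP [].
Qed.

End Spectrum.

Section CyclicByInvolutions.
Variables (gT : finGroupType) (G R : {group gT}).
Hypotheses (cycR : cyclic R) (nsRG : R <| G).
Hypothesis invG : {in G :\: R, forall x, x ^+ 2 = 1}.
Implicit Types (C H : {group gT}).

Lemma common_order_notin_cyclic (H1 H2 : {group gT}) k :
    H1 \subset G -> H2 \subset G -> pi_e H1 k -> pi_e H2 k ->
    ~~ pi_e (H1 :&: H2 :&: R) k ->
  exists2 w, w \in G :\: R & #[w] = k.
Proof.
move=> sH1G sH2G /pi_eP [x xH1 <-] /pi_eP [y yH2 oyx].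
have [xR | xnR] := boolP (x \in R); last first.
  by exists x; rewrite // inE xnR (subsetP sH1G).
have [yR | ynR] := boolP (y \in R); last first.
  by exists y; rewrite // inE ynR (subsetP sH2G).
have xH2 : x \in H2.
  by rewrite -cycle_subG (eq_cycle_cyclic cycR xR yR (esym oyx)) cycle_subG.
by case/pi_eP; exists x; rewrite // !inE xH1 xH2.
Qed.

Lemma pi_e_join_involution C w k : C \subset R -> w \in G :\: R ->
  pi_e (C <*> <[w]>) k = pi_e C k || (k == 2).
Proof.
move=> sCR wGR; have /setDP [wG wnR] := wGR; have w2 := invG wGR.
have ow : #[w] = 2.
  by apply: order_involution w2 _; apply: contraNneq wnR => ->.
have nCw : <[w]> \subset 'N(C).
  rewrite cycle_subG (subsetP _ w wG) //.
  by apply: char_norm_trans (normal_norm nsRG); rewrite sub_cyclic_char.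
rewrite norm_joinEr //; apply/idP/idP.
  case/pi_eP => _ /mulsgP [c _ cC /cycleP [i ->] ->] <-.
  rewrite -(expg_mod i w2) modn2; case: (odd i); last first.
    by rewrite expg0 mulg1; apply/orP; left; apply/pi_eP; exists c.
  have cwGR : c * w \in G :\: R.
    have cR := subsetP sCR c cC; have cG := subsetP (normal_sub nsRG) c cR.
    by rewrite inE (groupMl _ cR) (groupMl _ cG) wnR wG.
  rewrite expg1.
  by case: (pi_e_involution C (invG cwGR)) => [-> | ->]; rewrite ?orbT.
rewrite -norm_joinEr //; case/orP => [Ck | /eqP ->].
  exact: pi_eS (joing_subl _ _) Ck.
by apply/pi_eP; exists w; rewrite // (subsetP (joing_subr _ _)) ?cycle_id.
Qed.

Lemma spec_meet_closed_cyclic_by_involutions : spec_meet_closed G.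
Proof.
move=> H1 H2 sH1G sH2G; set C := (H1 :&: H2 :&: R)%G.
have sCR : C \subset R by rewrite subsetIr.
have sCH1 : C \subset H1 by rewrite /= -setIA subsetIl.
have sCH2 : C \subset H2 by rewrite /= setIAC subsetIr.
have pi_eC k : pi_e C k -> pi_e H1 k && pi_e H2 k.
  by move=> Ck; rewrite (pi_eS sCH1 Ck) (pi_eS sCH2 Ck).
have common2 k : pi_e H1 k -> pi_e H2 k -> ~~ pi_e C k -> k = 2.
  move=> H1k H2k nCk.
  have [w wGR ow] := common_order_notin_cyclic sH1G sH2G H1k H2k nCk.
  by case: (pi_e_involution C (invG wGR)); rewrite ow // (negbTE nCk).
have [/and3P [nC2 H1_2 H2_2] | no2] :=
  boolP [&& ~~ pi_e C 2, pi_e H1 2 & pi_e H2 2].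
  have [w wGR _] := common_order_notin_cyclic sH1G sH2G H1_2 H2_2 nC2.
  exists (C <*> <[w]>)%G.
    rewrite join_subG cycle_subG (setDP wGR).1 andbT.
    exact: subset_trans sCR (normal_sub nsRG).
  move=> k; rewrite pi_e_join_involution //.
  apply/orP/andP => [[/pi_eC/andP // | /eqP ->] // | [H1k H2k]].
  by have [|/(common2 k H1k H2k) ->] := boolP (pi_e C k); [left | right].
exists C; first exact: subset_trans sCH1 sH1G.
move=> k; apply/idP/andP => [/pi_eC/andP // | [H1k H2k]].
apply: contraNT no2 => nCk; have k2 := common2 k H1k H2k nCk.
by rewrite -k2 nCk H1k H2k.
Qed.

End CyclicByInvolutions.

Section Dihedral.
Variables (gT : finGroupType) (r s : gT).
Hypotheses (s2 : s ^+ 2 = 1) (srs : s * r * s^-1 = r^-1).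

Let sV : s^-1 = s.
Proof. by apply/eqP; rewrite eq_invg_mul -expg2 s2. Qed.

Lemma dihedral_conj_cycle c : c \in <[r]> -> c ^ s = c^-1.
Proof.
have rs : r ^ s = r^-1 by rewrite conjgE mulgA -srs sV.
by case/cycleP => i ->; rewrite conjXg rs expgVn.
Qed.

Lemma dihedral_norm_cycle : s \in 'N(<[r]>).
Proof.
by apply/normP; rewrite -cycleJ dihedral_conj_cycle ?cycle_id // cycleV.
Qed.

Lemma dihedral_cycle_normal : <[r]> <| <[r]> <*> <[s]>.
Proof.
by rewrite /normal joing_subl join_subG normG cycle_subG dihedral_norm_cycle.
Qed.

Lemma dihedral_involution :
  {in <[r]> <*> <[s]> :\: <[r]>, forall x, x ^+ 2 = 1}.
Proof.
move=> x /setDP []; rewrite norm_joinEr ?cycle_subG ?dihedral_norm_cycle //.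
case/mulsgP => c _ cR /cycleP [i ->] ->.
rewrite -(expg_mod i s2) modn2; case: (odd i) => /= [_ | ]; last first.
  by rewrite expg0 mulg1 cR.
by rewrite expg1 expg2 -mulgA -{1}sV -conjgE dihedral_conj_cycle // mulgV.
Qed.

End Dihedral.

Theorem theorem2p5 (n : nat) (gT : finGroupType) (G : {group gT}) :
  0 < n ->
  G \isog Grp (r : s : r ^+ n, s ^+ 2, s * r * s^-1 = r^-1) ->
  spec_poset_is_lattice G.
Proof.
move=> _ /isoGrp_hom /existsP [[r s]] /= /eqP [defG _ s2 srs].
apply/spec_lattice_of_meet_closed.
apply: (spec_meet_closed_cyclic_by_involutions (cycle_cyclic r)).
  by rewrite -defG dihedral_cycle_normal.
by rewrite -defG; apply: dihedral_involution.
Qed.
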